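(* There exist finitely presented amenable inverse monoids that are not sofic.
   Context: A monoid is a set with an associative binary operation admitting an identity element. A semigroup $S$ is an inverse semigroup if for every $s \in S$ there is a unique $x \in S$ with $s = sxs$ and $x = xsx$; an inverse monoid is an inverse semigroup that is a monoid. A monoid $M$ is amenable if there is a mean (a positive linear functional of norm one taking value $1$ on the constant function $1$) on $\ell^\infty(M)$ that is invariant under left and right translations by elements of $M$. For a non-empty finite set $X$, $\mathrm{Map}(X)$ denotes the monoid of all maps $X \to X$ under composition (identity $\mathrm{Id}_X$), with the Hamming metric $d_X(f,g) = |\{x \in X : f(x) \neq g(x)\}|/|X|$. For a monoid $M$, finite $K \subset M$ and $\varepsilon,\alpha>0$, a map $\varphi\colon M \to \mathrm{Map}(X)$ is a $(K,\varepsilon)$-morphism if $d_X(\varphi(k_1k_2),\varphi(k_1)\varphi(k_2)) \le \varepsilon$ for all $k_1,k_2 \in K$ and $d_X(\varphi(1_M),\mathrm{Id}_X) \le \varepsilon$; it is $(K,\alpha)$-injective if $d_X(\varphi(k_1),\varphi(k_2)) \ge \alpha$ for all distinct $k_1,k_2 \in K$. $M$ is sofic if for every finite $K \subset M$ and every $\varepsilon>0$ there exist a non-empty finite set $X$ and a $(K,1-\varepsilon)$-injective $(K,\varepsilon)$-morphism $\varphi\colon M \to \mathrm{Map}(X)$. *)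

From mathcomp Require Import all_boot.
From Stdlib Require Import Reals.
From Stdlib Require List.

Set Implicit Arguments.
Unset Strict Implicit.
Unset Printing Implicit Defensive.

Record monoid := Monoid {
  mcarrier :> Type;
  mop : mcarrier -> mcarrier -> mcarrier;
  mone : mcarrier;
  mopA : forall x y z, mop x (mop y z) = mop (mop x y) z;
  mop1l : forall x, mop mone x = x;
  mop1r : forall x, mop x mone = x
}.

Arguments mop {m}.
Arguments mone {m}.

Definition is_inverse_monoid (M : monoid) : Prop :=
  forall s : M, exists! x : M, s = mop (mop s x) s /\ x = mop (mop x s) x.

Definition bounded_fun (M : Type) (f : M -> R) : Prop :=
  exists C : R, forall x, (Rabs (f x) <= C)%R.

(* A mean on l^oo(M): a positive linear functional of norm one with m(1) = 1.
   The functional is given on all of M -> R but only its values on bounded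
   functions matter. Norm <= 1 is stated as |m f| <= C whenever |f| <= C;
   together with m 1 = 1 this means the norm is exactly one. *)
Definition is_mean (M : Type) (m : (M -> R) -> R) : Prop :=
  (forall f g, bounded_fun f -> bounded_fun g ->
     m (fun x => f x + g x)%R = (m f + m g)%R) /\
  (forall (a : R) f, bounded_fun f -> m (fun x => a * f x)%R = (a * m f)%R) /\
  (forall f, bounded_fun f -> (forall x, 0 <= f x)%R -> (0 <= m f)%R) /\
  (forall f (C : R), bounded_fun f -> (forall x, Rabs (f x) <= C)%R ->
     (Rabs (m f) <= C)%R) /\
  m (fun _ => 1%R) = 1%R.

Definition amenable (M : monoid) : Prop :=
  exists m : (M -> R) -> R, is_mean m /\
    forall (s : M) (f : M -> R), bounded_fun f ->
      m (fun x => f (mop s x)) = m f /\ m (fun x => f (mop x s)) = m f.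

Definition hamming (X : finType) (f g : X -> X) : R :=
  (INR #|[pred x | f x != g x]| / INR #|X|)%R.

Definition KE_morphism (M : monoid) (X : finType) (K : list M) (eps : R)
  (phi : M -> X -> X) : Prop :=
  (forall k1 k2, List.In k1 K -> List.In k2 K ->
     (hamming (phi (mop k1 k2)) (fun x => phi k1 (phi k2 x)) <= eps)%R) /\
  (hamming (phi mone) (fun x => x) <= eps)%R.

Definition KA_injective (M : monoid) (X : finType) (K : list M) (alpha : R)
  (phi : M -> X -> X) : Prop :=
  forall k1 k2, List.In k1 K -> List.In k2 K -> k1 <> k2 ->
    (alpha <= hamming (phi k1) (phi k2))%R.

(* Sofic monoid. Finite subsets K of M are given by lists. *)
Definition sofic (M : monoid) : Prop :=
  forall (K : list M) (eps : R), (0 < eps)%R ->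
    exists (X : finType) (phi : M -> X -> X),
      0 < #|X| /\ @KA_injective M X K (1 - eps)%R phi /\ @KE_morphism M X K eps phi.

Inductive thue_cong (T : Type) (rels : seq (seq T * seq T)) :
    seq T -> seq T -> Prop :=
  | thue_step u v a b : List.In (a, b) rels ->
      thue_cong rels (u ++ a ++ v) (u ++ b ++ v)
  | thue_refl w : thue_cong rels w w
  | thue_sym w1 w2 : thue_cong rels w1 w2 -> thue_cong rels w2 w1
  | thue_trans w1 w2 w3 : thue_cong rels w1 w2 -> thue_cong rels w2 w3 ->
      thue_cong rels w1 w3.

Definition eval_word (M : monoid) (n : nat) (gen : 'I_n -> M) (w : seq 'I_n) : M :=
  foldr (fun i acc => mop (gen i) acc) mone w.

Definition finitely_presented (M : monoid) : Prop :=
  exists (n : nat) (gen : 'I_n -> M) (rels : seq (seq 'I_n * seq 'I_n)),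
    (forall s : M, exists w, eval_word gen w = s) /\
    (forall w1 w2, eval_word gen w1 = eval_word gen w2 <-> thue_cong rels w1 w2).

(* The witness is the bicyclic monoid with a zero adjoined, B0 = <p, q | p q = 1>
   together with an absorbing element 0.  It is an inverse monoid, and it is
   presented on the generators p, q, 0 by p q = 1 and the relations making 0
   absorbing.  The Dirac mean at the zero is invariant under both translations,
   so B0 is amenable.  It is not sofic because finite sets are quantitatively
   Dedekind-finite: if psi (chi x) = x for all but k points x of X, then
   chi (psi y) = y for all but k points y.  Applied to approximations of p and q,
   p q = 1 forces the approximation of q p to be close to that of 1, whereas
   q p <> 1 would require them to be almost everywhere different. *)
From Pilot Require Import Defs.
From mathcomp Require Import all_boot zify.
From Stdlib Require Import Reals Lra.

Set Implicit Arguments.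
Unset Strict Implicit.
Unset Printing Implicit Defensive.

Lemma eval_word_cat (M : monoid) n (gen : 'I_n -> M) u v :
  eval_word gen (u ++ v) = mop (eval_word gen u) (eval_word gen v).
Proof.
elim: u => [|i u IH] /=; first by rewrite mop1l.
by rewrite IH mopA.
Qed.

Section ThuePresentation.

Variables (M : monoid) (n : nat) (gen : 'I_n -> M).
Variable rels : seq (seq 'I_n * seq 'I_n).

Lemma thue_cong_eval :
  (forall a b, List.In (a, b) rels -> eval_word gen a = eval_word gen b) ->
  forall w1 w2, thue_cong rels w1 w2 -> eval_word gen w1 = eval_word gen w2.
Proof.
move=> rels_sound w1 w2; elim=> [u v a b /rels_sound Eab | // | ?? _ -> // | ??? _ -> _ -> //].
by rewrite !eval_word_cat Eab.
Qed.

Lemma thue_cong_cons i w1 w2 :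
  thue_cong rels w1 w2 -> thue_cong rels (i :: w1) (i :: w2).
Proof.
elim=> [u v a b rel_ab | w | ?? _ IH | ??? _ IH1 _ IH2].
- exact: (@thue_step _ rels (i :: u) v a b rel_ab).
- exact: thue_refl.
- exact: thue_sym IH.
- exact: thue_trans IH1 IH2.
Qed.

Lemma thue_cong_rule a b v :
  List.In (a, b) rels -> thue_cong rels (a ++ v) (b ++ v).
Proof. exact: (@thue_step _ rels [::]). Qed.

Lemma finitely_presented_by_normal_form (nf : M -> seq 'I_n) :
  (forall a b, List.In (a, b) rels -> eval_word gen a = eval_word gen b) ->
  (forall s, eval_word gen (nf s) = s) ->
  nf mone = [::] ->
  (forall i s, thue_cong rels (i :: nf s) (nf (mop (gen i) s))) ->
  finitely_presented M.
Proof.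
move=> rels_sound eval_nf nf1 nf_cons.
have to_nf w : thue_cong rels w (nf (eval_word gen w)).
  elim: w => [|i w IH]; first by rewrite nf1; apply: thue_refl.
  exact: thue_trans (thue_cong_cons i IH) (nf_cons i _).
exists n, gen, rels; split=> [s | w1 w2]; first by exists (nf s).
split; last exact: thue_cong_eval.
move=> E; apply: thue_trans (to_nf w1) _.
by rewrite E; apply: thue_sym.
Qed.

End ThuePresentation.

Lemma amenable_of_zero (M : monoid) (z : M) :
  (forall s, mop z s = z) -> (forall s, mop s z = z) -> amenable M.
Proof.
move=> zs sz; exists (fun f => f z).
split; last by move=> s f _; rewrite zs sz.
by do !split=> // f *; apply.
Qed.

Section Hamming.

Variable X : finType.

Lemma hammingC (f g : X -> X) : hamming f g = hamming g f.
Proof.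
by rewrite /hamming (@eq_card _ _ [pred x | g x != f x]) // => x; rewrite !inE eq_sym.
Qed.

Lemma hamming_triangle (f g h : X -> X) :
  (hamming f h <= hamming f g + hamming g h)%R.
Proof.
have card_le : #|[pred x | f x != h x]|
               <= #|[pred x | f x != g x]| + #|[pred x | g x != h x]|.
  rewrite -cardUI; apply: leq_trans (leq_addr _ _).
  apply: subset_leq_card; apply/subsetP => x /=; rewrite !inE.
  by case: (f x =P g x) => //= ->.
move/leP/le_INR: card_le; rewrite plus_INR /hamming /Rdiv -Rmult_plus_distr_r.
have [->|nX0] := Req_dec (INR #|X|) 0; first by rewrite Rinv_0; lra.
move=> card_le; apply: Rmult_le_compat_r card_le.
by apply/Rlt_le/Rinv_0_lt_compat; have := pos_INR #|X|; lra.
Qed.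

(* chi is injective on the fixed points S of psi \o chi and maps them to fixed
   points of chi \o psi, so the latter are at least as many. *)
Lemma card_comp_neq_id (psi chi : X -> X) :
  #|[pred y | chi (psi y) != y]| <= #|[pred x | psi (chi x) != x]|.
Proof.
set S := [set x | psi (chi x) == x].
have chiS_fixed : chi @: S \subset [set y | chi (psi y) == y].
  apply/subsetP => _ /imsetP[x + ->]; rewrite !inE => /eqP fx.
  by rewrite fx.
have chiS_card : #|chi @: S| = #|S|.
  by apply: card_in_imset => x y; rewrite !inE => /eqP fx /eqP fy E; rewrite -fx -fy E.
have card_fixed (h : X -> X) :
    #|[set x | h x == x]| + #|[pred x | h x != x]| = #|X|.
  by rewrite -(cardC [set x | h x == x]); congr (_ + _); apply: eq_card => x; rewrite !inE.
have /= := card_fixed (fun y => chi (psi y)); have /= := card_fixed (fun x => psi (chi x)).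
have := subset_leq_card chiS_fixed; rewrite chiS_card /S; lia.
Qed.

End Hamming.

Lemma not_sofic_of_one_sided_inverse (M : monoid) (a b : M) :
  mop a b = mone -> mop b a <> mone -> ~ sofic M.
Proof.
move=> ab1 ba_neq1 M_sofic.
(* With eps = 1/10, the triangle inequalities below put phi (b a) within 4 eps
   of phi 1, while injectivity puts it at least 1 - eps away. *)
have [X [phi [X_gt0 [phi_inj [phi_mul phi1]]]]] :=
  M_sofic [:: a; b; mone; mop b a] (1/10)%R ltac:(lra).
have near_ab := phi_mul a b ltac:(simpl; tauto) ltac:(simpl; tauto).
have near_ba := phi_mul b a ltac:(simpl; tauto) ltac:(simpl; tauto).
have far_ba := phi_inj (mop b a) mone ltac:(simpl; tauto) ltac:(simpl; tauto) ba_neq1.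
rewrite ab1 in near_ab.
have swap : (hamming (fun x => phi b (phi a x)) (fun x => x)
             <= hamming (fun x => phi a (phi b x)) (fun x => x))%R.
  apply/Rmult_le_compat_r/le_INR/leP/card_comp_neq_id.
  exact/Rlt_le/Rinv_0_lt_compat/lt_0_INR/ltP.
have := hamming_triangle (phi (mop b a)) (fun x => phi b (phi a x)) (phi mone).
have := hamming_triangle (fun x => phi b (phi a x)) (fun x => x) (phi mone).
have := hamming_triangle (fun x => phi a (phi b x)) (phi mone) (fun x => x).
rewrite (hammingC (fun x => x)) (hammingC _ (phi mone)); lra.
Qed.

(* [Some (i, j)] encodes q^i p^j and [None] the zero; the product follows from
   p q = 1, which cancels min(j, k) letters in q^i p^j q^k p^l. *)
Definition bicyclic0_mul (s t : option (nat * nat)) : option (nat * nat) :=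
  match s, t with
  | Some (i, j), Some (k, l) => Some (i + (k - minn j k), (j - minn j k) + l)
  | _, _ => None
  end.

Lemma bicyclic0_mulA : associative bicyclic0_mul.
Proof. by case=> [[i j]|] [[k l]|] [[m n]|] //=; congr (Some (_, _)); lia. Qed.

Lemma bicyclic0_mul1l : left_id (Some (0, 0)) bicyclic0_mul.
Proof. by case=> [[i j]|] //=; congr (Some (_, _)); lia. Qed.

Lemma bicyclic0_mul1r : right_id (Some (0, 0)) bicyclic0_mul.
Proof. by case=> [[i j]|] //=; congr (Some (_, _)); lia. Qed.

Definition bicyclic0 : monoid :=
  @Defs.Monoid _ bicyclic0_mul (Some (0, 0)) bicyclic0_mulA bicyclic0_mul1l bicyclic0_mul1r.

Lemma bicyclic0_inverse : is_inverse_monoid bicyclic0.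
Proof.
case=> [[i j]|]; last by exists None; split=> // -[[k l]|] // [].
exists (Some (j, i)); split.
  by split; rewrite /mop /=; congr (Some (_, _)); lia.
case=> [[k l]|] [] //= [E1 E2] [E3 E4].
by congr (Some (_, _)); lia.
Qed.

Lemma bicyclic0_amenable : amenable bicyclic0.
Proof. by apply: (@amenable_of_zero bicyclic0 None) => -[[]|]. Qed.

Lemma bicyclic0_not_sofic : ~ sofic bicyclic0.
Proof. exact: (@not_sofic_of_one_sided_inverse bicyclic0 (Some (0, 1)) (Some (1, 0))). Qed.

Definition letter_p : 'I_3 := @Ordinal 3 0 isT.
Definition letter_q : 'I_3 := @Ordinal 3 1 isT.
Definition letter_z : 'I_3 := @Ordinal 3 2 isT.

Lemma ord3P (i : 'I_3) : [\/ i = letter_p, i = letter_q | i = letter_z].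
Proof.
by case: i => -[|[|[|?]]] ? //; [constructor 1 | constructor 2 | constructor 3];
  apply: val_inj.
Qed.

Definition bicyclic0_gen (i : 'I_3) : bicyclic0 :=
  match val i with 0 => Some (0, 1) | 1 => Some (1, 0) | _ => None end.

Definition bicyclic0_rels : seq (seq 'I_3 * seq 'I_3) :=
  [:: ([:: letter_p; letter_q], [::]);
      ([:: letter_z; letter_p], [:: letter_z]); ([:: letter_p; letter_z], [:: letter_z]);
      ([:: letter_z; letter_q], [:: letter_z]); ([:: letter_q; letter_z], [:: letter_z]);
      ([:: letter_z; letter_z], [:: letter_z])].

Definition bicyclic0_nf (s : bicyclic0) : seq 'I_3 :=
  if s is Some (i, j) then nseq i letter_q ++ nseq j letter_p else [:: letter_z].

Local Notation cong := (thue_cong bicyclic0_rels).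

Lemma bicyclic0_rels_sound a b : List.In (a, b) bicyclic0_rels ->
  eval_word bicyclic0_gen a = eval_word bicyclic0_gen b.
Proof. by rewrite /=; do ! case=> [[<- <-] //|]. Qed.

Lemma bicyclic0_eval_nf s : eval_word bicyclic0_gen (bicyclic0_nf s) = s.
Proof.
case: s => [[i j]|] //; rewrite eval_word_cat.
have -> : eval_word bicyclic0_gen (nseq i letter_q) = Some (i, 0).
  by elim: i => [|i /= ->] //=; congr (Some (_, _)); lia.
have -> : eval_word bicyclic0_gen (nseq j letter_p) = Some (0, j).
  by elim: j => [|j /= ->] //=; congr (Some (_, _)); lia.
by rewrite /=; congr (Some (_, _)); lia.
Qed.

Lemma zero_absorbs_letters g k w : g != letter_z ->
  cong (letter_z :: nseq k g ++ w) (letter_z :: w).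
Proof.
move=> gNz; elim: k => [|k IH]; first exact: thue_refl.
apply: thue_trans IH; apply: (thue_cong_rule (a := [:: letter_z; g]) (b := [:: letter_z])).
by case: (ord3P g) gNz => -> //= _; auto 7.
Qed.

Lemma bicyclic0_nf_cons i s :
  cong (i :: bicyclic0_nf s) (bicyclic0_nf (mop (bicyclic0_gen i) s)).
Proof.
case: s => [[k l]|]; last first.
  case: (ord3P i) => ->;
    by apply: (thue_cong_rule (a := [:: _; letter_z]) (b := [:: letter_z]) [::]) => /=; auto 7.
case: (ord3P i) => ->.
- case: k => [|k].
    have -> : mop (bicyclic0_gen letter_p) (Some (0, l)) = Some (0, l.+1).
      by rewrite /=; congr (Some (_, _)); lia.
    exact: thue_refl.
  have -> : mop (bicyclic0_gen letter_p) (Some (k.+1, l)) = Some (k, l).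
    by rewrite /=; congr (Some (_, _)); lia.
  by apply: (thue_cong_rule (a := [:: letter_p; letter_q]) (b := [::])) => /=; auto 7.
- have -> : mop (bicyclic0_gen letter_q) (Some (k, l)) = Some (k.+1, l).
    by rewrite /=; congr (Some (_, _)); lia.
  exact: thue_refl.
- apply: thue_trans (zero_absorbs_letters _ _ _) _ => //.
  by rewrite -[nseq l _]cats0; apply: zero_absorbs_letters.
Qed.

Lemma bicyclic0_finitely_presented : finitely_presented bicyclic0.
Proof.
apply: (finitely_presented_by_normal_form (rels := bicyclic0_rels) (nf := bicyclic0_nf)).
- exact: bicyclic0_rels_sound.
- exact: bicyclic0_eval_nf.
- by [].
- exact: bicyclic0_nf_cons.
Qed.

Theorem corollary5p5 :
  exists M : monoid,
    is_inverse_monoid M /\ finitely_presented M /\ amenable M /\ ~ sofic M.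
Proof.
exists bicyclic0; split; first exact: bicyclic0_inverse.
split; first exact: bicyclic0_finitely_presented.
split; first exact: bicyclic0_amenable.
exact: bicyclic0_not_sofic.
Qed.
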